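(* Let $\mathcal{A}\in\mathbb{R}^{d_1\times\cdots\times d_k}$ be an order-$k$ real tensor and $\pi\in\mathcal{P}_{[k]}$. If $\mathcal{A}$ is $\pi$-OD, then for every partition $\tau$ in the upper cone $U_\pi=\{\tau\in\mathcal{P}_{[k]}:\ \pi\le\tau<\mathbf{1}_{[k]}\}$, \[ \|\mathrm{Unfold}_\tau(\mathcal{A})\|_\sigma=\|\mathrm{Unfold}_\pi(\mathcal{A})\|_\sigma . \]
   Context: $\mathcal{P}_{[k]}$ is the set of partitions of $[k]$, ordered by refinement ($\pi\le\tau$ if every block of $\pi$ lies in a block of $\tau$; $\tau<\mathbf{1}_{[k]}$ means $\tau\ne\{[k]\}$). $\mathcal{A}$ is $\pi$-orthogonal decomposable ($\pi$-OD) if $\mathcal{A}=\sum_{n=1}^r\lambda_n\mathbf{a}^{(n)}_1\otimes\cdots\otimes\mathbf{a}^{(n)}_k$ with $\lambda_1\ge\cdots\ge\lambda_r\ge0$, $\mathbf{a}^{(n)}_i\in\mathbb{R}^{d_i}$, and $\langle\otimes_{i\in B}\mathbf{a}^{(n)}_i,\otimes_{i\in B}\mathbf{a}^{(m)}_i\rangle=\delta_{nm}$ for all $B\in\pi$, $n,m\in[r]$. For a real tensor $\mathcal{T}\in\mathbb{R}^{e_1\times\cdots\times e_m}$, $\|\mathcal{T}\|_\sigma=\sup\{\sum t_{i_1\dots i_m}x^{(1)}_{i_1}\cdots x^{(m)}_{i_m}:\ \|\mathbf{x}_n\|_2=1\}$. Unfolding: for $\pi=\{B_1,\dots,B_\ell\}$,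 $\mathrm{Unfold}_\pi(\mathcal{A})$ is the order-$\ell$ tensor of dimensions $(\prod_{j\in B_1}d_j,\dots,\prod_{j\in B_\ell}d_j)$ whose entry at $(m_1,\dots,m_\ell)$ is $a_{i_1\dots i_k}$, where $m_j$ corresponds to $(i_r)_{r\in B_j}$ under a fixed bijection $\prod_{r\in B_j}[d_r]\to[\prod_{r\in B_j}d_r]$. *)

From HB Require Import structures.
From mathcomp Require Import all_boot all_order all_algebra.
From mathcomp Require Import reals.
Set Implicit Arguments. Unset Strict Implicit. Unset Printing Implicit Defensive.
Import Order.TTheory GRing.Theory Num.Theory.
Local Open Scope ring_scope.

Definition midx (k : nat) (d : 'I_k -> nat) := {dffun forall i : 'I_k, 'I_(d i)}.
Definition tensor (R : Type) (k : nat) (d : 'I_k -> nat) := midx d -> R.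

Definition bidx (k : nat) (d : 'I_k -> nat) (B : {set 'I_k}) :=
  {dffun forall j : {r : 'I_k | r \in B}, 'I_(d (val j))}.

Definition restr (k : nat) (d : 'I_k -> nat) (B : {set 'I_k}) (m : midx d)
  : bidx d B := [ffun j : {r : 'I_k | r \in B} => m (val j)].

Definition is_setpart (k : nat) (P : {set {set 'I_k}}) : bool :=
  partition P [set: 'I_k].
Definition refines (k : nat) (P Q : {set {set 'I_k}}) : Prop :=
  forall B, B \in P -> exists2 C, C \in Q & B \subset C.
Definition top_part (k : nat) : {set {set 'I_k}} := [set [set: 'I_k]].

Definition spec_norm (R : realType) (I : finType) (X : I -> finType)
  (T : {dffun forall i : I, X i} -> R) : R :=
  reals.sup (fun s : R => exists x : forall i : I, X i -> R,
     (forall i, \sum_(t : X i) (x i t) ^+ 2 = 1) /\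
     s = \sum_(t : {dffun forall i : I, X i}) T t * \prod_(i : I) x i (t i)).

Definition blocks (k : nat) (P : {set {set 'I_k}}) := {B : {set 'I_k} | B \in P}.

(* Unfold_P(A): the tensor whose modes are the blocks B of P, the index of the
   mode B being the tuple (i_r)_{r in B} (this is the canonical identification
   of prod_{r in B}[d_r] with [prod_{r in B} d_r]).  Its entry at (m_B)_B is
   A at the unique multi-index whose restriction to each block B is m_B
   (written as a sum over matching multi-indices, which has exactly one term
   when P is a partition of [k]). *)
Definition unfold (R : realType) (k : nat) (d : 'I_k -> nat)
  (P : {set {set 'I_k}}) (A : tensor R d)
  : {dffun forall b : blocks P, bidx d (val b)} -> R :=
  fun mb => \sum_(m : midx d | [forall b : blocks P, restr (val b) m == mb b]) A m.

Definition unfold_norm (R : realType) (k : nat) (d : 'I_k -> nat)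
  (P : {set {set 'I_k}}) (A : tensor R d) : R :=
  @spec_norm R (blocks P) (fun b => bidx d (val b)) (unfold A).

Definition piOD (R : realType) (k : nat) (d : 'I_k -> nat)
  (P : {set {set 'I_k}}) (A : tensor R d) : Prop :=
  exists (r : nat) (lam : 'I_r -> R) (a : 'I_r -> forall i : 'I_k, 'I_(d i) -> R),
    [/\ (forall n m : 'I_r, (n <= m)%N -> lam m <= lam n),
        (forall n, 0 <= lam n),
        (forall mi : midx d, A mi = \sum_(n < r) lam n * \prod_(i < k) a n i (mi i)) &
        (forall B, B \in P -> forall n m : 'I_r,
           \sum_(t : bidx d B)
             \prod_(j : {r0 : 'I_k | r0 \in B}) (a n (val j) (t j) * a m (val j) (t j))
           = (n == m)%:R)].

From mathcomp Require Import all_boot all_order all_algebra.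
From mathcomp Require Import reals.
From mathcomp Require Import ring lra.
From mathcomp Require classical_sets boolp.
Set Implicit Arguments. Unset Strict Implicit. Unset Printing Implicit Defensive.
Import Order.TTheory GRing.Theory Num.Theory.
Local Open Scope ring_scope.

(* Write A = sum_n lam_n a_n with lam_0 maximal. For a partition P refined by
   pi, the factors of a_n along the blocks of P are still orthonormal, since
   each block of P is a disjoint union of blocks of pi.  Plugging unit vectors
   x_B into Unfold_P(A) gives sum_n lam_n prod_B <u_n^B, x_B>; if P has at least
   two blocks B1, B2, the product is at most (<u_n^B1,x_B1>^2 + <u_n^B2,x_B2>^2)/2
   and Bessel's inequality bounds the sum by lam_0, which is attained at
   x_B = u_0^B.  Hence every such unfolding has spectral norm lam_0. *)

Lemma sum_dffun_prod (R : comNzRingType) (I : finType) (X : I -> finType)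
  (h : forall i, X i -> R) :
  \sum_(f : {dffun forall i : I, X i}) \prod_i h i (f i) = \prod_i \sum_(t : X i) h i t.
Proof.
under eq_bigr do rewrite (big_tag (fun i t => h i t)).
rewrite bigA_distr_big_dep.
have := @big_fprod R 0 1 *%R _ I X (fun i => [ffun t => h i t]).
move=> /(_ (GRing.Algebra_add__canonical__Monoid_AddLaw R)) E.
transitivity (\sum_(g in family (tagged_with X))
                \prod_i untag 0 [ffun t => h i t] (g i)); last first.
  apply: eq_bigr => g _; apply: eq_bigr => i _.
  by rewrite /untag; case: eqP => // e; rewrite ffunE.
rewrite -E (reindex (@fprod_of_dffun I X)); last first.
  by apply: onW_bij; apply: fprod_of_dffun_bij.
apply: eq_bigr => f _; apply: eq_bigr => i _.
by rewrite ffunE /fprod_of_dffun fprodE.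
Qed.

Lemma sup_max (R : realType) (S : classical_sets.set R) (M : R) :
  (forall s, S s -> s <= M) -> S M -> reals.sup S = M.
Proof.
move=> ub SM; apply/le_anti/andP; split.
  by apply: ge_sup; [exists M | apply/classical_sets.ubP].
have : classical_sets.ubound S (reals.sup S).
  by apply: ub_le_sup; exists M; apply/classical_sets.ubP.
by move/classical_sets.ubP; apply.
Qed.

Lemma sup_eq0 (R : realType) (S : classical_sets.set R) :
  (forall s, S s -> s = 0) -> reals.sup S = 0.
Proof.
move=> S0; have [S0_in | S0_notin] := boolp.pselect (S 0).
  by apply: sup_max => // s /S0 ->.
suff -> : S = classical_sets.set0 by exact: sup0.
apply: boolp.funext => s; apply: boolp.propext; split=> // Ss.
by apply: S0_notin; rewrite -(S0 s Ss).
Qed.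

Lemma bessel_ineq (R : realFieldType) (X : finType) (r : nat)
  (u : 'I_r -> X -> R) (x : X -> R) :
  (forall n m, \sum_t u n t * u m t = (n == m)%:R) -> \sum_t x t ^+ 2 = 1 ->
  \sum_n (\sum_t u n t * x t) ^+ 2 <= 1.
Proof.
move=> u_ortho x_unit.
pose c n := \sum_t u n t * x t.
pose s t := \sum_n c n * u n t.
have x_dot_s : \sum_t x t * s t = \sum_n c n ^+ 2.
  under eq_bigr do rewrite /s big_distrr.
  rewrite exchange_big; apply: eq_bigr => n _ /=.
  rewrite expr2 [X in _ * X]/c big_distrr; apply: eq_bigr => t _ /=; rewrite /c; ring.
have s_norm : \sum_t s t ^+ 2 = \sum_n c n ^+ 2.
  under eq_bigr do rewrite /s expr2 big_distrlr /=.
  rewrite exchange_big; apply: eq_bigr => n _ /=; rewrite exchange_big /=.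
  transitivity (\sum_m c n * c m * (n == m)%:R).
    apply: eq_bigr => m _; rewrite -u_ortho big_distrr; apply: eq_bigr => t _ /=; ring.
  rewrite (bigD1 n) //= eqxx mulr1 big1 ?addr0 ?expr2 // => m.
  by rewrite eq_sym => /negbTE ->; rewrite mulr0.
have : 0 <= \sum_t (x t - s t) ^+ 2 by apply: sumr_ge0 => t _; apply: sqr_ge0.
have -> : \sum_t (x t - s t) ^+ 2
          = \sum_t x t ^+ 2 - 2 * \sum_t x t * s t + \sum_t s t ^+ 2.
  rewrite mulr_sumr -sumrB -big_split; apply: eq_bigr => t _ /=; ring.
by rewrite x_dot_s s_norm x_unit -/c; lra.
Qed.

Lemma prod_le_mean_sqr (R : realFieldType) (I : finType) (c : I -> R) (b1 b2 : I) :
  b1 != b2 -> (forall b, `|c b| <= 1) ->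
  \prod_b c b <= (c b1 ^+ 2 + c b2 ^+ 2) / 2.
Proof.
move=> b12 c_le1; apply: le_trans (real_ler_norm (num_real _)) _.
rewrite normr_prod (bigD1 b1) //= (bigD1 b2) /=; last by rewrite eq_sym b12.
set p := \prod_(_ | _) _.
have p0 : 0 <= p by apply: prodr_ge0 => b _.
have p1 : p <= 1 by apply: prodr_ile1 => b _; rewrite normr_ge0 c_le1.
have := normr_ge0 (c b1); have := normr_ge0 (c b2).
rewrite -[c b1 ^+ 2]real_normK ?num_real // -[c b2 ^+ 2]real_normK ?num_real //.
set y1 := `|c b1|; set y2 := `|c b2|; move=> y2_0 y1_0.
have : 0 <= (y1 - y2) ^+ 2 by apply: sqr_ge0.
have : y1 * (y2 * p) <= y1 * y2 by rewrite mulrA ler_piMr ?mulr_ge0.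
rewrite !expr2; lra.
Qed.

Lemma weighted_prod_le_max (R : realFieldType) (I : finType) (r : nat)
  (lam : 'I_r.+1 -> R) (c : 'I_r.+1 -> I -> R) (b1 b2 : I) :
  b1 != b2 -> (forall n, 0 <= lam n <= lam ord0) ->
  (forall b, \sum_n c n b ^+ 2 <= 1) ->
  \sum_n lam n * \prod_b c n b <= lam ord0.
Proof.
move=> b12 lam_bd c_bessel.
have c_le1 n b : `|c n b| <= 1.
  have : c n b ^+ 2 <= 1.
    apply: le_trans (c_bessel b); rewrite (bigD1 n) //= lerDl.
    by apply: sumr_ge0 => m _; apply: sqr_ge0.
  by rewrite -real_normK ?num_real // expr_le1 ?normr_ge0.
pose mean n := (c n b1 ^+ 2 + c n b2 ^+ 2) / 2.
apply: le_trans (_ : \sum_n lam ord0 * mean n <= _).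
  apply: ler_sum => n _; have /andP[lam0 lam_le] := lam_bd n.
  have mean0 : 0 <= mean n by rewrite divr_ge0 ?addr_ge0 ?sqr_ge0.
  apply: le_trans (ler_wpM2r mean0 lam_le).
  exact: ler_wpM2l lam0 _ _ (prod_le_mean_sqr b12 (c_le1 n)).
rewrite -mulr_sumr -mulr_suml big_split /=.
have := c_bessel b1; have := c_bessel b2; have /andP[lam0 _] := lam_bd ord0; nra.
Qed.

Section SetPartition.
Variables (k : nat) (d : 'I_k -> nat) (P : {set {set 'I_k}}).
Hypothesis P_part : is_setpart P.

Lemma mem_cover_setpart (i : 'I_k) : i \in cover P.
Proof. by case/and3P: P_part => /eqP -> _ _; rewrite in_setT. Qed.

Lemma trivIset_setpart : trivIset P.
Proof. by case/and3P: P_part. Qed.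

Lemma set0_notin_setpart : set0 \notin P.
Proof. by case/and3P: P_part. Qed.

Definition block_of (i : 'I_k) : blocks P :=
  exist _ (pblock P i) (pblock_mem (mem_cover_setpart i)).

Lemma mem_block_of (i : 'I_k) : i \in val (block_of i).
Proof. by rewrite mem_pblock mem_cover_setpart. Qed.

Lemma block_of_eq (b : blocks P) (i : 'I_k) : i \in val b -> block_of i = b.
Proof. by move=> ib; apply: val_inj; apply: def_pblock trivIset_setpart (valP b) ib. Qed.

Definition glue (mb : {dffun forall b : blocks P, bidx d (val b)}) : midx d :=
  [ffun i => (mb (block_of i) (exist _ i (mem_block_of i)) : 'I_(d i))].

Lemma restr_glue (mb : {dffun forall b : blocks P, bidx d (val b)}) (b : blocks P) :
  restr (val b) (glue mb) = mb b.
Proof.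
apply/ffunP => -[i ib]; rewrite !ffunE /=.
have mb_congr (b' : blocks P) (ib' : i \in val b') :
    b' = b -> mb b' (exist _ i ib') = mb b (exist _ i ib).
  by move=> e; subst b'; rewrite (bool_irrelevance ib' ib).
exact: mb_congr (block_of_eq ib).
Qed.

Lemma glueE (mb : {dffun forall b : blocks P, bidx d (val b)}) (b : blocks P)
  (j : {r : 'I_k | r \in val b}) : glue mb (val j) = mb b j.
Proof. by have /ffunP/(_ j) := restr_glue mb b; rewrite ffunE. Qed.

Lemma glue_unique (mb : {dffun forall b : blocks P, bidx d (val b)}) (m : midx d) :
  (forall b, restr (val b) m = mb b) -> m = glue mb.
Proof.
move=> m_restr; apply/ffunP => i; rewrite ffunE.
by have /ffunP/(_ (exist _ i (mem_block_of i))) := m_restr (block_of i); rewrite ffunE.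
Qed.

Lemma unfold_glue (R : realType) (A : tensor R d)
  (mb : {dffun forall b : blocks P, bidx d (val b)}) : @unfold R k d P A mb = A (glue mb).
Proof.
rewrite /unfold (big_pred1 (glue mb)) // => m /=.
apply/forallP/eqP => [m_restr | ->]; last by move=> b; apply/eqP/restr_glue.
by apply: glue_unique => b; apply/eqP/m_restr.
Qed.

Lemma prod_over_blocks (R : comNzRingType) (F : 'I_k -> R) :
  \prod_i F i = \prod_(b : blocks P) \prod_(j : {r : 'I_k | r \in val b}) F (val j).
Proof.
have -> : \prod_i F i = \prod_(i in cover P) F i.
  by apply: eq_bigl => i; rewrite mem_cover_setpart.
rewrite big_trivIset ?trivIset_setpart // big_sub.
by apply: eq_bigr => b _; rewrite big_sub.
Qed.

Lemma setpart_setT : [set: 'I_k] \in P -> P = top_part k.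
Proof.
move=> TP; apply/setP => B; rewrite in_set1.
apply/idP/eqP => [BP | ->//].
have /set0Pn[j jB] : B != set0 by apply: contraNneq set0_notin_setpart => <-.
rewrite -(def_pblock trivIset_setpart BP jB).
exact: def_pblock trivIset_setpart TP (in_setT j).
Qed.

Lemma two_blocks (i : 'I_k) : P != top_part k -> exists b1 b2 : blocks P, b1 != b2.
Proof.
move=> P_ntop.
have /subsetPn[j _ j_notin] : ~~ ([set: 'I_k] \subset pblock P i).
  rewrite subTset; apply: contraNneq P_ntop => iT; apply/eqP.
  by apply: setpart_setT; rewrite -iT pblock_mem ?mem_cover_setpart.
exists (block_of i), (block_of j); apply: contraNneq j_notin => /(congr1 val) /= ->.
by rewrite mem_pblock mem_cover_setpart.
Qed.

End SetPartition.

Lemma setpart_ord0 (k : nat) (P : {set {set 'I_k}}) :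
  k = 0%N -> is_setpart P -> P = set0.
Proof.
move=> k0 P_part; apply/setP => B; rewrite in_set0; apply/negP => BP.
have B0 : B = set0 by apply/setP => i; exfalso; case: i; rewrite k0.
by move: (set0_notin_setpart P_part); rewrite -B0 BP.
Qed.

Lemma refines_top (k : nat) (P Q : {set {set 'I_k}}) :
  is_setpart Q -> refines P Q -> P = top_part k -> Q = top_part k.
Proof.
move=> Q_part PQ P_top; apply: setpart_setT => //.
have [C CQ] : exists2 C, C \in Q & [set: 'I_k] \subset C.
  by apply: PQ; rewrite P_top in_set1.
by rewrite subTset => /eqP <-.
Qed.

Section BlockFactors.
Variables (R : realType) (k : nat) (d : 'I_k -> nat).

Definition block_factor (v : forall i : 'I_k, 'I_(d i) -> R) (B : {set 'I_k})
  (t : bidx d B) : R :=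
  \prod_(j : {r : 'I_k | r \in B}) v (val j) (t j).

Lemma sum_block_factorM (v w : forall i : 'I_k, 'I_(d i) -> R) (B : {set 'I_k}) :
  \sum_(t : bidx d B) block_factor v t * block_factor w t
  = \prod_(j in B) \sum_(s : 'I_(d j)) v j s * w j s.
Proof.
rewrite [RHS]big_sub; apply: etrans (sum_dffun_prod (fun j s => v (val j) s * w (val j) s)).
by apply: eq_bigr => t _; rewrite -big_split.
Qed.

Definition orthonormal_on (r : nat) (a : 'I_r -> forall i : 'I_k, 'I_(d i) -> R)
  (B : {set 'I_k}) : Prop :=
  forall n m, \sum_(t : bidx d B) block_factor (a n) t * block_factor (a m) t = (n == m)%:R.

Lemma orthonormal_on_coarsen (r : nat) (a : 'I_r -> forall i : 'I_k, 'I_(d i) -> R)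
  (pi P : {set {set 'I_k}}) :
  is_setpart pi -> is_setpart P -> refines pi P ->
  (forall B, B \in pi -> orthonormal_on a B) ->
  forall C, C \in P -> orthonormal_on a C.
Proof.
move=> pi_part P_part pi_P a_ortho C CP n m; rewrite sum_block_factorM.
pose Q := [set B in pi | B \subset C].
have pblock_Q j : j \in C -> pblock pi j \in Q.
  move=> jC; rewrite inE pblock_mem ?mem_cover_setpart //=.
  have [C' C'P sub] := pi_P _ (pblock_mem (mem_cover_setpart pi_part j)).
  have jC' : j \in C' by apply: (subsetP sub); rewrite mem_pblock mem_cover_setpart.
  rewrite -(def_pblock (trivIset_setpart P_part) CP jC).
  by rewrite (def_pblock (trivIset_setpart P_part) C'P jC').
have cover_Q : cover Q = C.
  apply/setP => j; apply/bigcupP/idP => [[B] | jC].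
    by rewrite inE => /andP[_ /subsetP]; apply.
  by exists (pblock pi j); rewrite ?pblock_Q ?mem_pblock ?mem_cover_setpart.
have trivIset_Q : trivIset Q.
  apply: trivIsetS (trivIset_setpart pi_part).
  by apply/subsetP => B; rewrite inE => /andP[].
rewrite -cover_Q big_trivIset //.
rewrite (eq_bigr (fun _ => (n == m)%:R)) => [|B]; last first.
  by rewrite inE => /andP[Bpi _]; rewrite -sum_block_factorM a_ortho.
have /set0Pn[j0 j0C] : C != set0 by apply: contraNneq (set0_notin_setpart P_part) => <-.
case: eqP => _; first by rewrite big1.
by rewrite (bigD1 (pblock pi j0)) ?pblock_Q //= mul0r.
Qed.

Lemma unfold_pairing (P : {set {set 'I_k}}) (A : tensor R d) (r : nat)
  (lam : 'I_r -> R) (a : 'I_r -> forall i : 'I_k, 'I_(d i) -> R)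
  (x : forall b : blocks P, bidx d (val b) -> R) :
  is_setpart P ->
  (forall mi : midx d, A mi = \sum_(n < r) lam n * \prod_(i < k) a n i (mi i)) ->
  \sum_(t : {dffun forall b : blocks P, bidx d (val b)})
      @unfold R k d P A t * \prod_b x b (t b)
  = \sum_(n < r) lam n *
      \prod_(b : blocks P) \sum_(t : bidx d (val b)) block_factor (a n) t * x b t.
Proof.
move=> P_part A_dec.
under eq_bigr => t _.
  rewrite (unfold_glue P_part) A_dec big_distrl /=.
  under eq_bigr => n _ do rewrite (prod_over_blocks P_part) -mulrA -big_split /=.
over.
rewrite exchange_big /=; apply: eq_bigr => n _.
rewrite -big_distrr /= -sum_dffun_prod; congr (_ * _); apply: eq_bigr => t _.
apply: eq_bigr => b _; congr (_ * _); apply: eq_bigr => j _.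
by rewrite (glueE P_part).
Qed.

End BlockFactors.

Lemma unfold_norm_eq0 (R : realType) (k : nat) (d : 'I_k -> nat) (A : tensor R d)
  (P : {set {set 'I_k}}) : (forall mi, A mi = 0) -> unfold_norm P A = 0.
Proof.
move=> A0; apply: sup_eq0 => s [x [_ ->]].
by apply: big1 => t _; rewrite /unfold big1 ?mul0r.
Qed.

Lemma unfold_norm_odeco (R : realType) (k : nat) (d : 'I_k -> nat) (A : tensor R d)
  (pi P : {set {set 'I_k}}) (r : nat) (lam : 'I_r.+1 -> R)
  (a : 'I_r.+1 -> forall i : 'I_k, 'I_(d i) -> R) :
  is_setpart pi -> is_setpart P -> refines pi P -> (exists b1 b2 : blocks P, b1 != b2) ->
  (forall n, 0 <= lam n <= lam ord0) ->
  (forall mi : midx d, A mi = \sum_(n < r.+1) lam n * \prod_(i < k) a n i (mi i)) ->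
  (forall B, B \in pi -> orthonormal_on a B) ->
  unfold_norm P A = lam ord0.
Proof.
move=> pi_part P_part pi_P [b1 [b2 b12]] lam_bd A_dec a_ortho.
have a_orthoP (b : blocks P) : orthonormal_on a (val b).
  exact: (orthonormal_on_coarsen pi_part P_part pi_P a_ortho (valP b)).
apply: sup_max => [s [x [x_unit ->]] | ].
  rewrite (unfold_pairing _ P_part A_dec).
  apply: weighted_prod_le_max b12 lam_bd _ => b.
  exact: bessel_ineq (a_orthoP b) (x_unit b).
pose u0 (b : blocks P) := @block_factor R k d (a ord0) (val b).
exists u0; split.
  by move=> b; under eq_bigr do rewrite expr2; rewrite a_orthoP.
symmetry; apply: etrans (unfold_pairing u0 P_part A_dec) _.
under eq_bigr do under eq_bigr do rewrite a_orthoP.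
rewrite (bigD1 ord0) //= big1_eq mulr1 big1 ?addr0 // => n n0.
by rewrite (bigD1 b1) //= (negbTE n0) mul0r mulr0.
Qed.

Theorem theorem5p5 (R : realType) (k : nat) (d : 'I_k -> nat)
  (A : tensor R d) (pi : {set {set 'I_k}}) :
  is_setpart pi -> piOD pi A ->
  forall tau : {set {set 'I_k}},
    is_setpart tau -> refines pi tau -> tau != top_part k ->
    unfold_norm tau A = unfold_norm pi A.
Proof.
move=> pi_part [r [lam [a [lam_dec lam_ge0 A_dec a_ortho]]]] tau tau_part pi_tau tau_ntop.
have {}a_ortho B : B \in pi -> orthonormal_on a B.
  by move=> Bpi n m; rewrite -(a_ortho B Bpi n m); apply: eq_bigr => t _; rewrite -big_split.
case: r lam a lam_dec lam_ge0 A_dec a_ortho => [|r] lam a lam_dec lam_ge0 A_dec a_ortho.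
  by rewrite !unfold_norm_eq0 // => mi; rewrite A_dec big_ord0.
have [k0 | k_gt0] := posnP k.
  by rewrite (setpart_ord0 k0 pi_part) (setpart_ord0 k0 tau_part).
have lam_bd n : 0 <= lam n <= lam ord0 by rewrite lam_ge0 lam_dec.
have norm_lam0 P : is_setpart P -> refines pi P -> P != top_part k ->
    unfold_norm P A = lam ord0.
  move=> P_part pi_P P_ntop.
  have two_blocks_P := two_blocks P_part (Ordinal k_gt0) P_ntop.
  exact: unfold_norm_odeco pi_part P_part pi_P two_blocks_P lam_bd A_dec a_ortho.
have pi_ntop : pi != top_part k.
  by apply: contraNneq tau_ntop => /(refines_top tau_part pi_tau) ->.
have pi_pi : refines pi pi by move=> B Bpi; exists B.
by rewrite !norm_lam0.
Qed.
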